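(* Let $G$ be a graph of order $n$ and let $(x_1,\ldots,x_n)$ be a unit eigenvector of the adjacency matrix of $G$ for the eigenvalue $\mu(G)$. If $u$ is a vertex with $x_u=\min\{x_1,\ldots,x_n\}$, then \[ \mu(G-u)\geq\mu(G)\,\frac{1-2x_u^2}{1-x_u^2}. \]
   Context: All graphs are finite and simple; $\mu(G)$ denotes the largest eigenvalue of the adjacency matrix of $G$; $G-u$ is the graph obtained from $G$ by deleting the vertex $u$; the eigenvector is indexed by the vertices of $G$. *)

From HB Require Import structures.
From mathcomp Require Import all_boot all_order all_algebra.
From mathcomp Require Import reals.
Set Implicit Arguments. Unset Strict Implicit. Unset Printing Implicit Defensive.
Import Order.TTheory GRing.Theory Num.Theory.
Local Open Scope ring_scope.

Definition simple_graph (n : nat) (e : rel 'I_n) : Prop :=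
  (forall i j, e i j = e j i) /\ (forall i, ~~ e i i).

Definition adjmx (R : realType) (n : nat) (e : rel 'I_n) : 'M[R]_n :=
  \matrix_(i, j) (e i j)%:R.

(* G - u : delete vertex u from a graph on 'I_n.+1; the remaining vertices
   are relabelled by 'I_n through lift u. *)
Definition del_vertex (n : nat) (e : rel 'I_n.+1) (u : 'I_n.+1) : rel 'I_n :=
  fun i j => e (lift u i) (lift u j).

Definition largest_eigenvalue (R : realType) (n : nat) (A : 'M[R]_n) (m : R)
  : Prop :=
  eigenvalue A m /\ (forall a : R, eigenvalue A a -> a <= m).

From HB Require Import structures.
From mathcomp Require Import all_boot all_order all_algebra.
From mathcomp Require Import reals complex ring.
Import Order.TTheory GRing.Theory Num.Theory.
Set Implicit Arguments. Unset Strict Implicit.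
Local Open Scope ring_scope.
Local Open Scope sesquilinear_scope.

(** Restrict the unit Perron vector [x] of [G] to [G - u]: its Rayleigh
   quotient for [G - u] is a lower bound for [mu(G - u)].  Since [A(G)] has a
   zero diagonal, the quadratic form of [G - u] at the restriction is
   [x^T A x - 2 x_u (A x)_u = mu - 2 mu x_u^2], and its squared norm is
   [1 - x_u^2].  The Rayleigh bound itself comes from the spectral theorem for
   the Hermitian complexification of a real symmetric matrix. *)

Section Rayleigh.
Variable R : realType.
Local Notation rc := (real_complex R).

Lemma map_conj_real_complex m n (A : 'M[R]_(m, n)) :
  map_mx Num.conj (map_mx rc A) = map_mx rc A.
Proof.
by apply/matrixP => i j; rewrite !mxE conj_Creal //; apply/complex_realP; exists (A i j).
Qed.

Lemma real_complex_sym_hermsymmx m (B : 'M[R]_m) :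
  B^T = B -> map_mx rc B \is hermsymmx.
Proof.
move=> Bsym; apply/is_hermitianmxP; rewrite expr0 scale1r.
by rewrite -map_trmx map_conj_real_complex map_trmx Bsym.
Qed.

Lemma spectral_diag_le m (B : 'M[R]_m) (mu : R) :
  B^T = B -> (forall a, eigenvalue B a -> a <= mu) ->
  forall i, spectral_diag (map_mx rc B) 0 i <= rc mu.
Proof.
move=> Bsym Hmu i; set Bc := map_mx rc B; set P := spectralmx Bc.
have Bh := real_complex_sym_hermsymmx Bsym.
have PU : P \is unitarymx := spectral_unitarymx Bc.
have BcE : Bc = invmx P *m diag_mx (spectral_diag Bc) *m P.
  exact/orthomx_spectralP/hermitian_normalmx.
have PB : P *m Bc = diag_mx (spectral_diag Bc) *m P.
  by rewrite {1}BcE !mulmxA mulmxV ?mul1mx // spectral_unit.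
have /RRe_real rd := mxOverP (hermitian_spectral_diag_real Bh) 0 i.
rewrite -rd lecR; apply: Hmu.
rewrite /eigenvalue /eigenspace -(map_mx_eq0 rc) map_kermx map_mxB map_scalar_mx /=.
rewrite rd -/Bc; apply/eigenvalueP; exists (row i P).
  by rewrite -row_mul PB row_mul row_diag_mx -scalemxAl -rowE.
apply/negP => /eqP rowP0; have := congr1 (row i) (unitarymxP PU).
rewrite row_mul rowP0 mul0mx row1 => /(congr1 (fun M : 'rV_m => M 0 i)).
by rewrite !mxE !eqxx /= => /eqP; rewrite eq_sym oner_eq0.
Qed.

(* The quadratic form of [B] in the orthonormal eigenbasis: [z = y P^*]. *)
Lemma rayleigh_le m (B : 'M[R]_m) (mu : R) :
  B^T = B -> (forall a, eigenvalue B a -> a <= mu) ->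
  forall y : 'cV[R]_m, (y^T *m B *m y) 0 0 <= mu * (y^T *m y) 0 0.
Proof.
move=> Bsym Hmu y; set Bc := map_mx rc B; set P := spectralmx Bc.
set d := spectral_diag Bc; set yc := map_mx rc y^T.
have PU : P \is unitarymx := spectral_unitarymx Bc.
have Pinv : invmx P = P^t* := invmx_unitary PU.
have BcE : Bc = P^t* *m diag_mx d *m P.
  by rewrite -Pinv; exact/orthomx_spectralP/hermitian_normalmx/real_complex_sym_hermsymmx.
have ycC : yc ^t* = yc^T by rewrite /yc -map_trmx map_conj_real_complex map_trmx.
have ycT : map_mx rc y = yc ^t* by rewrite ycC /yc map_trmx trmxK.
set z := yc *m P^t*.
have Pz : P *m yc^t* = z^t* by rewrite /z trmx_mul map_mxM trmxCK.
have normE : rc ((y^T *m y) 0 0) = \sum_j z 0 j * (z 0 j)^*.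
  have -> : rc ((y^T *m y) 0 0) = (map_mx rc (y^T *m y)) 0 0 by rewrite [RHS]mxE.
  rewrite map_mxM -/yc ycT.
  have -> : yc *m yc^t* = z *m z^t*.
    by rewrite -Pz /z !mulmxA -[yc *m _ *m P]mulmxA -Pinv mulVmx ?spectral_unit ?mulmx1.
  by rewrite mxE; apply: eq_bigr => j _; rewrite !mxE.
have formE : rc ((y^T *m B *m y) 0 0) = \sum_j d 0 j * (z 0 j * (z 0 j)^*).
  have -> : rc ((y^T *m B *m y) 0 0) = (map_mx rc (y^T *m B *m y)) 0 0 by rewrite [RHS]mxE.
  rewrite !map_mxM -/yc -/Bc ycT BcE.
  rewrite !mulmxA -/z -[z *m _ *m P *m _]mulmxA Pz mxE; apply: eq_bigr => j _.
  by rewrite mul_mx_diag !mxE mulrCA mulrA.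
rewrite -lecR rmorphM /= formE normE mulr_sumr; apply: ler_sum => j _.
by rewrite ler_wpM2r ?mul_conjC_ge0 ?spectral_diag_le.
Qed.

Lemma eigenvalue_bound_ge_diag m (B : 'M[R]_m) (mu : R) :
  B^T = B -> (forall a, eigenvalue B a -> a <= mu) -> forall i, B i i <= mu.
Proof.
move=> Bsym Hmu i; have := rayleigh_le Bsym Hmu (delta_mx i 0).
by rewrite trmx_delta -rowE -colE mul_delta_mx !mxE !eqxx mulr1.
Qed.

End Rayleigh.

Lemma eigenvalue_dim_gt0 (R : fieldType) m (M : 'M[R]_m) a :
  eigenvalue M a -> (0 < m)%N.
Proof. by case: m M => [|m] M //; rewrite /eigenvalue /eigenspace thinmx0 eqxx. Qed.

Lemma adjmx_tr (R : realType) k (f : rel 'I_k) :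
  simple_graph f -> (adjmx R f)^T = adjmx R f.
Proof. by move=> [fsym _]; apply/matrixP => i j; rewrite !mxE fsym. Qed.

Lemma quad_formE (R : comRingType) k (A : 'M[R]_k) (y : 'cV[R]_k) :
  (y^T *m A *m y) 0 0 = \sum_i y i 0 * (A *m y) i 0.
Proof. by rewrite -mulmxA mxE; apply: eq_bigr => i _; rewrite mxE. Qed.

Section VertexDeletion.
Variables (R : realType) (n : nat) (e : rel 'I_n.+1).
Hypothesis He : simple_graph e.

Lemma simple_graph_del_vertex u : simple_graph (del_vertex e u).
Proof. by have [esym eirr] := He; split => [i j|i]; [exact: esym | exact: eirr]. Qed.

Definition del_coord (u : 'I_n.+1) (x : 'cV[R]_n.+1) : 'cV[R]_n :=
  \col_j x (lift u j) 0.

Lemma norm_del_coord u x :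
  ((del_coord u x)^T *m del_coord u x) 0 0 = (x^T *m x) 0 0 - x u 0 ^+ 2.
Proof.
rewrite !mxE (bigD1_ord u) //= !mxE -expr2 addrC addrK.
by apply: eq_bigr => j _; rewrite !mxE.
Qed.

Lemma adjmx_mul_vertex (u : 'I_n.+1) (x : 'cV[R]_n.+1) :
  (adjmx R e *m x) u 0 = \sum_j (e u (lift u j))%:R * x (lift u j) 0.
Proof.
have [_ eirr] := He.
by rewrite mxE (bigD1_ord u) //= !mxE (negbTE (eirr u)) mul0r add0r;
  apply: eq_bigr => j _; rewrite !mxE.
Qed.

(* Both the row and the column of [u] meet the form, hence the factor 2. *)
Lemma quad_form_del_vertex (u : 'I_n.+1) (x : 'cV[R]_n.+1) :
  (x^T *m adjmx R e *m x) 0 0 =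
  ((del_coord u x)^T *m adjmx R (del_vertex e u) *m del_coord u x) 0 0
  + 2 * x u 0 * (adjmx R e *m x) u 0.
Proof.
have [esym _] := He.
have rowE j : (adjmx R e *m x) (lift u j) 0 =
    (e u (lift u j))%:R * x u 0 + (adjmx R (del_vertex e u) *m del_coord u x) j 0.
  rewrite !mxE (bigD1_ord u) //= !mxE esym; congr (_ + _).
  by apply: eq_bigr => k _; rewrite !mxE.
rewrite !quad_formE (bigD1_ord u) //=.
under eq_bigr => j _ do rewrite rowE mulrDr.
rewrite big_split /= adjmx_mul_vertex.
have -> : \sum_j x (lift u j) 0 * ((e u (lift u j))%:R * x u 0) =
          x u 0 * \sum_j (e u (lift u j))%:R * x (lift u j) 0.
  by rewrite mulr_sumr; apply: eq_bigr => j _; ring.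
under [in RHS]eq_bigr => j _ do rewrite mxE.
ring.
Qed.

End VertexDeletion.

Theorem lemma2 (R : realType) (n : nat) (e : rel 'I_n.+1)
  (mu muu : R) (x : 'cV[R]_n.+1) (u : 'I_n.+1) :
  simple_graph e ->
  largest_eigenvalue (adjmx R e) mu ->
  largest_eigenvalue (adjmx R (del_vertex e u)) muu ->
  adjmx R e *m x = mu *: x ->
  \sum_(i < n.+1) x i 0 ^+ 2 = 1 ->
  (forall v : 'I_n.+1, x u 0 <= x v 0) ->
  mu * (1 - 2 * x u 0 ^+ 2) / (1 - x u 0 ^+ 2) <= muu.
Proof.
move=> He _ [/eigenvalue_dim_gt0 n_gt0 Hmuu] Hx Hnorm _.
have Hdel := simple_graph_del_vertex He u.
have ray := rayleigh_le (adjmx_tr R Hdel) Hmuu (del_coord u x).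
have normx : (x^T *m x) 0 0 = 1.
  by rewrite -Hnorm mxE; apply: eq_bigr => i _; rewrite mxE expr2.
have formx : (x^T *m adjmx R e *m x) 0 0 = mu.
  by rewrite -mulmxA Hx -scalemxAr [LHS]mxE normx mulr1.
have Hxu : (adjmx R e *m x) u 0 = mu * x u 0 by rewrite Hx mxE.
have normy := norm_del_coord u x; rewrite normx in normy.
have formy := quad_form_del_vertex He u x; rewrite formx Hxu in formy.
have {formy}formy : ((del_coord u x)^T *m adjmx R (del_vertex e u) *m del_coord u x) 0 0
    = mu * (1 - 2 * x u 0 ^+ 2).
  by apply: (addIr (2 * x u 0 * (mu * x u 0))); rewrite -formy; ring.
rewrite formy normy in ray.
have [xu1|xu1] := eqVneq (1 - x u 0 ^+ 2) 0.
  (* Division by [0] yields [0], and [mu(G - u) >= 0] since [A(G - u)] has a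
     zero diagonal. *)
  have := eigenvalue_bound_ge_diag (adjmx_tr R Hdel) Hmuu (Ordinal n_gt0).
  by rewrite xu1 invr0 mulr0 mxE /del_vertex (negbTE (He.2 _)).
have xu_gt0 : 0 < 1 - x u 0 ^+ 2.
  by rewrite lt_def xu1 -normy mxE sumr_ge0 // => j _; rewrite !mxE -expr2 sqr_ge0.
by rewrite ler_pdivrMr.
Qed.
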